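(* Let $(M,d)$ be a compact metric space and $\varphi:M\to M$ continuous. For all $\mathbb P\in\mathcal P_\varphi(M)$ and $\mathcal G=\{G_n\}\in\mathcal A(M)$, the limit $\mathcal G(\mathbb P)=\lim_{n\to\infty}n^{-1}\int G_n\,d\mathbb P$ exists and is finite, and for any approximating sequence $\{G^{(k)}\}$ of $\mathcal G$, $\mathcal G(\mathbb P)=\lim_{k\to\infty}\int G^{(k)}d\mathbb P$. Both convergences are uniform in $\mathbb P\in\mathcal P_\varphi(M)$, and $\mathbb P\mapsto\mathcal G(\mathbb P)$ is continuous on $\mathcal P_\varphi(M)$ with the weak topology.
   Context: $C(M),B(M)$: continuous/bounded Borel real functions with sup norm; $\mathcal P_\varphi(M)$: $\varphi$-invariant Borel probability measures; $S_nG=\sum_{k<n}G\circ\varphi^k$. $\mathcal A(M)$ is the set of $\{G_n\}\subset B(M)$ for which there is $\{G^{(k)}\}\subset C(M)$ (an approximating sequence) with $\lim_k\limsup_nn^{-1}\|G_n-S_nG^{(k)}\|_\infty=0$. *)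

From mathcomp Require Import all_boot all_order all_algebra.
From mathcomp Require Import all_classical all_reals all_analysis.
Set Implicit Arguments. Unset Strict Implicit. Unset Printing Implicit Defensive.
Import Order.TTheory GRing.Theory Num.Theory.
Import numFieldNormedType.Exports.
Local Open Scope classical_set_scope.
Local Open Scope ring_scope.

Notation borelM M := (g_sigma_algebraType (@open M)).

Definition birkhoff (R : realType) (M : Type) (phi : M -> M) (n : nat)
  (G : M -> R) : M -> R :=
  fun x => \sum_(k < n) G (iter k phi x).

Definition supnorm (R : realType) (M : Type) (f : M -> R) : R :=
  sup [set `|f x| | x in [set: M]].

Definition bounded_borel (R : realType) (M : pseudoPMetricType R) (f : M -> R) :=
  measurable_fun [set: borelM M] (f : borelM M -> R) /\
  exists c : R, forall x, `|f x| <= c.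

Definition phi_invariant (R : realType) (M : pseudoPMetricType R) (phi : M -> M)
  (P : probability (borelM M) R) :=
  forall A : set (borelM M), measurable A -> P (phi @^-1` A) = P A.

Definition approximating (R : realType) (M : pseudoPMetricType R) (phi : M -> M)
  (G : nat -> M -> R) (Gk : nat -> M -> R) :=
  (forall k, continuous (Gk k)) /\
  (fun k => limn_esup (fun n =>
     ((n%:R)^-1 * supnorm (G n \- birkhoff phi n (Gk k)))%:E)) @ \oo --> 0%E.

Definition in_A (R : realType) (M : pseudoPMetricType R) (phi : M -> M)
  (G : nat -> M -> R) :=
  (forall n, bounded_borel (G n)) /\ exists Gk, approximating phi G Gk.

Definition integ (R : realType) (M : pseudoPMetricType R)
  (P : probability (borelM M) R) (f : M -> R) : R :=
  Rintegral P [set: borelM M] (f : borelM M -> R).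

(* Continuity at P0 of F restricted to P_phi(M), for the weak topology:
   basic weak neighbourhoods of P0 are
   {Q : |int f_i dQ - int f_i dP0| < delta, i < m} with f_i in C(M). *)
Definition weakly_continuous_at (R : realType) (M : pseudoPMetricType R)
  (phi : M -> M) (F : probability (borelM M) R -> R)
  (P0 : probability (borelM M) R) :=
  forall eps : R, 0 < eps ->
  exists (m : nat) (fs : 'I_m -> M -> R) (delta : R),
    0 < delta /\ (forall i, continuous (fs i)) /\
    forall Q : probability (borelM M) R, phi_invariant phi Q ->
      (forall i, `|integ Q (fs i) - integ P0 (fs i)| < delta) ->
      `|F Q - F P0| < eps.

From mathcomp Require Import all_boot all_order all_algebra.
From mathcomp Require Import all_classical all_reals all_analysis.
From mathcomp Require Import measurable_realfun lra.
Import Order.TTheory GRing.Theory Num.Theory.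
Import numFieldNormedType.Exports.
Local Open Scope classical_set_scope.
Local Open Scope ring_scope.

(* For an invariant measure P, integrating a Birkhoff sum gives
   int S_n g dP = n int g dP, hence
     |n^-1 int G_n dP - int G^(k) dP| <= n^-1 ||G_n - S_n G^(k)||_oo,
   a bound that does not depend on P and whose limsup in n tends to 0 as k
   grows.  So the sequences n |-> n^-1 int G_n dP and k |-> int G^(k) dP are
   uniformly close in the iterated-limit sense: both converge, uniformly in P,
   to a common limit, which is weakly continuous as a uniform limit of the
   weakly continuous maps P |-> int G^(k) dP. *)

Section borel_continuous.
Context {R : realType} {T U : ptopologicalType}.

Lemma borel_measurable_continuous (f : T -> R) : continuous f ->
  measurable_fun [set: borelM T] (f : borelM T -> R).
Proof.
move=> /continuousP cf.
apply: (measurability _ (RGenOpens.measurableE R)).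
move=> _ [_ [a [b ->] <-]]; rewrite setTI.
by apply: sub_sigma_algebra; apply: cf; exact: interval_open.
Qed.

Lemma borel_measurable_continuous_map (f : T -> U) : continuous f ->
  measurable_fun [set: borelM T] (f : borelM T -> borelM U).
Proof.
move=> /continuousP cf.
apply: (@measurability _ _ (borelM T) (borelM U) _ _ (@open U)) => //.
by move=> _ [A oA <-]; rewrite setTI; apply: sub_sigma_algebra; exact: cf.
Qed.

End borel_continuous.

Section bounded_borel.
Context {R : realType} {M : pseudoPMetricType R}.
Implicit Types f g : M -> R.

Lemma bounded_borel_cst (c : R) : bounded_borel (fun _ : M => c).
Proof. by split; [exact: measurable_cst | exists `|c|]. Qed.

Lemma bounded_borel_continuous f : compact [set: M] -> continuous f ->
  bounded_borel f.
Proof.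
move=> cM cf; split; first exact: borel_measurable_continuous.
have /compact_bounded[c [_ hc]] : compact (f @` [set: M]).
  by apply: continuous_compact => //; exact: continuous_subspaceT.
exists (`|c| + 1) => x; apply: (hc (`|c| + 1)); last by exists x.
by rewrite (le_lt_trans (ler_norm c)) // ltrDl.
Qed.

Lemma bounded_borelD f g : bounded_borel f -> bounded_borel g ->
  bounded_borel (f \+ g).
Proof.
move=> [mf [a ha]] [mg [b hb]]; split; first exact: measurable_funD.
by exists (a + b) => x; apply: le_trans (ler_normD _ _) _; exact: lerD.
Qed.

Lemma bounded_borelB f g : bounded_borel f -> bounded_borel g ->
  bounded_borel (f \- g).
Proof.
move=> [mf [a ha]] [mg [b hb]]; split; first exact: measurable_funB.
by exists (a + b) => x; apply: le_trans (ler_normB _ _) _; exact: lerD.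
Qed.

Lemma bounded_borel_comp f (h : M -> M) : bounded_borel f ->
  measurable_fun [set: borelM M] (h : borelM M -> borelM M) ->
  bounded_borel (f \o h).
Proof.
move=> [mf [c hc]] mh; split; last by exists c => x; exact: hc.
exact: measurableT_comp mf mh.
Qed.

End bounded_borel.

Section birkhoff.
Context {R : realType} {M : pseudoPMetricType R} {phi : M -> M}.
Hypothesis cphi : continuous phi.
Implicit Types f g : M -> R.

Lemma birkhoff0 f : birkhoff phi 0 f = fun=> 0.
Proof. by apply: funext => x; rewrite /birkhoff big_ord0. Qed.

Lemma birkhoffS n f :
  birkhoff phi n.+1 f = birkhoff phi n f \+ (f \o iter n phi).
Proof. by apply: funext => x; rewrite /birkhoff /= big_ord_recr. Qed.

Lemma measurable_iter n :
  measurable_fun [set: borelM M] (iter n phi : borelM M -> borelM M).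
Proof.
elim: n => [|n ih]; first exact: measurable_id.
rewrite (_ : iter n.+1 phi = phi \o iter n phi) //.
by apply: measurableT_comp ih; exact: borel_measurable_continuous_map.
Qed.

Lemma bounded_borel_birkhoff n f : bounded_borel f ->
  bounded_borel (birkhoff phi n f).
Proof.
move=> bf; elim: n => [|n ih].
  by rewrite birkhoff0; exact: bounded_borel_cst.
rewrite birkhoffS; apply: bounded_borelD => //.
by apply: bounded_borel_comp => //; exact: measurable_iter.
Qed.

End birkhoff.

Section integ.
Context {R : realType} {M : pseudoPMetricType R} (P : probability (borelM M) R).
Implicit Types f g : M -> R.

Lemma integrable_bounded_borel f : bounded_borel f ->
  P.-integrable [set: borelM M] (EFin \o (f : borelM M -> R)).
Proof.
move=> [mf [c hc]]; apply: measurable_bounded_integrable => //.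
  by rewrite (le_lt_trans (probability_le1 P measurableT)) // ltry.
exists c; split; first exact: num_real.
by move=> y cy x _; rewrite /= (le_trans (hc x)) // ltW.
Qed.

Lemma integD f g : bounded_borel f -> bounded_borel g ->
  integ P (f \+ g) = integ P f + integ P g.
Proof.
by move=> bf bg; rewrite /integ RintegralD //; exact: integrable_bounded_borel.
Qed.

Lemma integB f g : bounded_borel f -> bounded_borel g ->
  integ P (f \- g) = integ P f - integ P g.
Proof.
by move=> bf bg; rewrite /integ RintegralB //; exact: integrable_bounded_borel.
Qed.

Lemma integ_cst (c : R) : integ P (fun=> c) = c.
Proof.
rewrite /integ Rintegral_cst // [X in fine X](_ : _ = 1%E) ?mulr1 //.
exact: probability_setT.
Qed.

Lemma normr_integ_le_supnorm f : bounded_borel f -> `|integ P f| <= supnorm f.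
Proof.
move=> bf; have [_ [c hc]] := bf; have intf := integrable_bounded_borel _ bf.
rewrite /integ; apply: le_trans; first exact: le_normr_Rintegral _ intf.
rewrite -[leRHS](integ_cst (supnorm f)); apply: le_Rintegral => //.
- exact: integrable_norm intf.
- exact/integrable_bounded_borel/bounded_borel_cst.
- move=> x _; apply: sup_ubound; last by exists x.
  by exists c => _ [y _ <-]; exact: hc.
Qed.

End integ.

Section invariant_integ.
Context {R : realType} {M : pseudoPMetricType R} {phi : M -> M}.
Hypothesis cphi : continuous phi.
Context {P : probability (borelM M) R}.
Hypothesis Pinv : phi_invariant phi P.
Implicit Types f g : M -> R.

Lemma integ_comp_invariant f : bounded_borel f ->
  integ P (f \o phi) = integ P f.
Proof.
move=> bf; have [mf _] := bf.
have mphi := borel_measurable_continuous_map _ cphi.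
have intf : P.-integrable (phi @^-1` [set: borelM M]) (EFin \o f \o phi).
  by rewrite preimage_setT; apply/integrable_bounded_borel/bounded_borel_comp.
have mEf := (measurable_EFinP _ _).2 mf.
have := integral_pushforward mphi mEf intf measurableT.
rewrite preimage_setT /integ /Rintegral => <-; congr fine.
apply: eq_measure_integral => //= A mA _.
by rewrite /pushforward Pinv.
Qed.

Lemma integ_iter_invariant n f : bounded_borel f ->
  integ P (f \o iter n phi) = integ P f.
Proof.
move=> bf; elim: n => [//|n ih].
rewrite (_ : f \o iter n.+1 phi = (f \o iter n phi) \o phi); last first.
  by apply: funext => x /=; rewrite -iterSr.
rewrite integ_comp_invariant //.
by apply: bounded_borel_comp => //; exact: measurable_iter.
Qed.

Lemma integ_birkhoff n f : bounded_borel f ->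
  integ P (birkhoff phi n f) = n%:R * integ P f.
Proof.
move=> bf; elim: n => [|n ih]; first by rewrite birkhoff0 integ_cst mul0r.
rewrite birkhoffS integD ?integ_iter_invariant ?ih ?mulrSr ?mulrDl ?mul1r //.
- exact: bounded_borel_birkhoff.
- by apply: bounded_borel_comp => //; exact: measurable_iter.
Qed.

Lemma birkhoff_average_error n Gn g : (0 < n)%N ->
  bounded_borel Gn -> bounded_borel g ->
  `|n%:R^-1 * integ P Gn - integ P g|
    <= n%:R^-1 * supnorm (Gn \- birkhoff phi n g).
Proof.
move=> n_gt0 bGn bg; have bSg := bounded_borel_birkhoff cphi n _ bg.
have n_neq0 : n%:R != 0 :> R by rewrite pnatr_eq0 -lt0n.
rewrite -[integ P g](mulKf n_neq0) -integ_birkhoff // -mulrBr -integB //.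
rewrite normrM ger0_norm ?invr_ge0 // ler_wpM2l ?invr_ge0 //.
exact/normr_integ_le_supnorm/bounded_borelB.
Qed.

End invariant_integ.

Lemma limn_esup_lt_near {R : realType} (u : (\bar R)^nat) (x : \bar R) :
  (limn_esup u < x)%E -> \forall n \near \oo, (u n < x)%E.
Proof.
move=> /ereal_inf_lt[_ [V [N _ NV] <-]] supV_lt; exists N => // n /NV Vn.
by apply: le_lt_trans supV_lt; apply: ereal_sup_ubound; exists n.
Qed.

Lemma cvgn_dist_le {R : realType} (u : R^nat) (b e : R) : cvgn u ->
  (\forall n \near \oo, `|u n - b| <= e) -> `|limn u - b| <= e.
Proof.
move=> cu ub; rewrite ler_distl; apply/andP; split.
- by apply: limr_ge cu _; apply: filterS ub => n; rewrite ler_distl => /andP[].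
- by apply: limr_le cu _; apply: filterS ub => n; rewrite ler_distl => /andP[].
Qed.

Section uniform_approximation.
Context {R : realType} {I : Type} {A : set I} {u v : I -> nat -> R}.
Hypothesis uv_close : forall e, 0 < e -> exists K, forall k, (K <= k)%N ->
  exists N, forall n, (N <= n)%N -> forall i, A i -> `|u i n - v i k| < e.

Lemma cvgn_approximated i : A i -> cvgn (u i).
Proof.
move=> Ai; apply: cauchy_cvg; apply: cauchy_exP => e e_gt0.
have [K KP] := uv_close _ e_gt0; have [N NP] := KP K (leqnn K).
exists (v i K), N => // n /= Nn.
by rewrite -ball_normE /ball_ /= distrC; exact: NP.
Qed.

Lemma limn_approx_dist_le e : 0 < e -> exists K, forall k, (K <= k)%N ->
  forall i, A i -> `|limn (u i) - v i k| <= e.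
Proof.
move=> e_gt0; have [K KP] := uv_close _ e_gt0; exists K => k Kk i Ai.
have [N NP] := KP k Kk; apply: cvgn_dist_le (cvgn_approximated _ Ai) _.
by exists N => // n Nn; exact/ltW/NP.
Qed.

Lemma approx_cvg_limn_uniform e : 0 < e -> exists K, forall k, (K <= k)%N ->
  forall i, A i -> `|v i k - limn (u i)| < e.
Proof.
move=> e_gt0; have e2_gt0 : 0 < e / 2 by rewrite divr_gt0.
have [K KP] := limn_approx_dist_le _ e2_gt0.
by exists K => k Kk i Ai; rewrite distrC; have := KP k Kk i Ai; lra.
Qed.

Lemma cvgn_limn_uniform e : 0 < e -> exists N, forall n, (N <= n)%N ->
  forall i, A i -> `|u i n - limn (u i)| < e.
Proof.
move=> e_gt0; have e2_gt0 : 0 < e / 2 by rewrite divr_gt0.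
have [K1 K1P] := uv_close _ e2_gt0.
have [K2 K2P] := limn_approx_dist_le _ e2_gt0.
have [N NP] := K1P (maxn K1 K2) (leq_maxl _ _).
exists N => n Nn i Ai.
have := NP n Nn i Ai; have := K2P _ (leq_maxr K1 K2) i Ai.
rewrite ler_distl ltr_distl => /andP[l1 l2] /andP[l3 l4].
by rewrite ltr_distl; apply/andP; split; lra.
Qed.

End uniform_approximation.

Section approximating_sequence.
Context {R : realType} {M : pseudoPMetricType R} {phi : M -> M}.
Hypotheses (cM : compact [set: M]) (cphi : continuous phi).

Lemma approximating_close (G Gk : nat -> M -> R) :
  (forall n, bounded_borel (G n)) -> approximating phi G Gk ->
  forall e, 0 < e -> exists K, forall k, (K <= k)%N ->
  exists N, forall n, (N <= n)%N ->
  forall P : probability (borelM M) R, phi_invariant phi P ->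
    `|n%:R^-1 * integ P (G n) - integ P (Gk k)| < e.
Proof.
move=> bG [cGk limsup0] e e_gt0.
have [K _ KP] : \forall k \near \oo, (limn_esup (fun n =>
    (n%:R^-1 * supnorm (G n \- birkhoff phi n (Gk k)))%:E) < e%:E)%E.
  apply: (limsup0 [set y | (y < e%:E)%E]); apply: open_nbhs_nbhs.
  by split; [exact: open_ereal_lt_ereal | rewrite /= lte_fin].
exists K => k /KP/limn_esup_lt_near[N _ NP]; exists N.+1 => n Nn P Pinv.
have bGk := bounded_borel_continuous _ cM (cGk k).
have n_gt0 : (0 < n)%N := leq_ltn_trans (leq0n N) Nn.
apply: le_lt_trans (birkhoff_average_error cphi Pinv _ _ _ n_gt0 (bG n) bGk) _.
by rewrite -lte_fin; apply: NP; exact: ltnW.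
Qed.

Lemma weakly_continuous_at_uniform_limit (F : probability (borelM M) R -> R)
    (f : nat -> M -> R) : (forall k, continuous (f k)) ->
  (forall e, 0 < e -> exists K, forall k, (K <= k)%N ->
     forall P, phi_invariant phi P -> `|integ P (f k) - F P| < e) ->
  forall P0, phi_invariant phi P0 -> weakly_continuous_at phi F P0.
Proof.
move=> cf fF P0 P0inv e e_gt0; have e3_gt0 : 0 < e / 3 by rewrite divr_gt0.
have [K KP] := fF _ e3_gt0.
exists 1%N, (fun=> f K), (e / 3); split=> //; split=> // Q Qinv /(_ ord0).
have := KP K (leqnn K) Q Qinv; have := KP K (leqnn K) P0 P0inv.
rewrite !ltr_distl => /andP[? ?] /andP[? ?] /andP[? ?].
by apply/andP; split; lra.
Qed.

End approximating_sequence.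

Theorem lemma2p3 (R : realType) (M : pseudoPMetricType R) (phi : M -> M)
  (G : nat -> M -> R) :
  hausdorff_space M -> compact [set: M] -> continuous phi ->
  in_A phi G ->
  exists GP : probability (borelM M) R -> R,
    (* n^{-1} int G_n dP -> GP P, uniformly in P in P_phi(M) *)
    (forall eps : R, 0 < eps -> exists N : nat, forall n : nat, (N <= n)%N ->
       forall P : probability (borelM M) R, phi_invariant phi P ->
         `|(n%:R)^-1 * integ P (G n) - GP P| < eps) /\
    (* for any approximating sequence, int G^(k) dP -> GP P uniformly *)
    (forall Gk : nat -> M -> R, approximating phi G Gk ->
     forall eps : R, 0 < eps -> exists K : nat, forall k : nat, (K <= k)%N ->
       forall P : probability (borelM M) R, phi_invariant phi P ->
         `|integ P (Gk k) - GP P| < eps) /\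
    (* P |-> GP P is continuous on P_phi(M) for the weak topology *)
    (forall P0 : probability (borelM M) R, phi_invariant phi P0 ->
       weakly_continuous_at phi GP P0).
Proof.
move=> _ cM cphi [bG [Gk0 Gk0_approx]].
pose u P n := n%:R^-1 * integ P (G n).
have close Gk (Gk_approx : approximating phi G Gk) :=
  approximating_close cM cphi _ _ bG Gk_approx.
have integ_Gk_cvg Gk (Gk_approx : approximating phi G Gk) :=
  approx_cvg_limn_uniform (close Gk Gk_approx).
exists (fun P => limn (u P)); split; [|split].
- exact: cvgn_limn_uniform (close Gk0 Gk0_approx).
- exact: integ_Gk_cvg.
- exact: weakly_continuous_at_uniform_limit Gk0_approx.1
    (integ_Gk_cvg Gk0 Gk0_approx).
Qed.
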